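(* Let $m, n_0, n_1$ be positive integers and $n(\lambda) = n_0 + n_1\lambda$. Suppose nonzero polynomials $x(\lambda), y(\lambda), z(\lambda) \in \mathbb{Q}[\lambda]$ satisfy $$\frac{m}{n(\lambda)} = \frac{1}{x(\lambda)} + \frac{1}{y(\lambda)} + \frac{1}{z(\lambda)}$$ identically, and that two of the three polynomials have degree $1$. Then the third polynomial has degree at most $3$.
   Context: $\lambda$ is an indeterminate; the equation is an identity of rational functions in $\lambda$. *)

From mathcomp Require Import all_boot all_order all_algebra fraction.
Set Implicit Arguments. Unset Strict Implicit. Unset Printing Implicit Defensive.
Import GRing.Theory.
Local Open Scope ring_scope.

Definition ratfun := {fraction {poly rat}}.
Definition rf (p : {poly rat}) : ratfun := @FracField.tofrac _ p.

From mathcomp Require Import all_boot all_order all_algebra fraction.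
From mathcomp Require Import ring.
Set Implicit Arguments. Unset Strict Implicit. Unset Printing Implicit Defensive.
Import GRing.Theory Num.Theory.
Local Open Scope ring_scope.

(* Clearing denominators gives [n a b = c (m a b - n b - n a)], so [c] divides
   the polynomial [n a b], whose degree is the sum of the three degrees. *)

Lemma size_natC_addX (R : numDomainType) (n0 n1 : nat) : (0 < n1)%N ->
  size (n0%:R%:P + n1%:R *: 'X : {poly R}) = 2%N.
Proof.
move=> n1_gt0; have n1R_neq0 : n1%:R != 0 :> R by rewrite pnatr_eq0 -lt0n.
by rewrite addrC -mul_polyC size_MXaddC polyC_eq0 (negPf n1R_neq0) size_polyC n1R_neq0.
Qed.

Lemma egyptian3_clear_denoms (F : fieldType) (m n a b c : F) :
  n != 0 -> a != 0 -> b != 0 -> c != 0 ->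
  m / n = a^-1 + b^-1 + c^-1 -> n * a * b = c * (m * a * b - n * b - n * a).
Proof.
move=> n_neq0 a_neq0 b_neq0 c_neq0 eq_mn.
have -> : m * a * b - n * b - n * a = n * a * b * (m / n - a^-1 - b^-1).
  by field; rewrite ?n_neq0 ?a_neq0 ?b_neq0.
by rewrite eq_mn; field; rewrite ?n_neq0 ?a_neq0 ?b_neq0 ?c_neq0.
Qed.

Local Notation "p %:F" := (@FracField.tofrac _ p).

Section PolyEgyptian3.
Variables (F : fieldType) (m n a b c : {poly F}).
Hypotheses (n_neq0 : n != 0) (a_neq0 : a != 0) (b_neq0 : b != 0) (c_neq0 : c != 0).
Hypothesis eq_mn : m%:F / n%:F = (a%:F)^-1 + (b%:F)^-1 + (c%:F)^-1.

Lemma egyptian3_dvdp : c %| n * a * b.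
Proof.
have frac_neq0 p : p != 0 -> p%:F != 0 :> {fraction {poly F}} by rewrite tofrac_eq0.
have := egyptian3_clear_denoms (frac_neq0 _ n_neq0) (frac_neq0 _ a_neq0)
  (frac_neq0 _ b_neq0) (frac_neq0 _ c_neq0) eq_mn.
rewrite -!(tofracM, tofracB) => /eqP; rewrite tofrac_eq => /eqP ->.
exact: dvdp_mulIl.
Qed.

Lemma size_egyptian3 : (size c <= (size n + size a + size b).-2)%N.
Proof.
have nab_neq0 : n * a * b != 0 by rewrite !mulf_neq0.
apply: leq_trans (dvdp_leq nab_neq0 egyptian3_dvdp) _.
have n_gt0 : (0 < size n)%N by rewrite size_poly_gt0.
by rewrite !size_mul ?mulf_neq0 //; case: (size n) n_gt0.
Qed.

End PolyEgyptian3.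

Theorem lemma2 (m n0 n1 : nat) (x y z : {poly rat}) :
  (0 < m)%N -> (0 < n0)%N -> (0 < n1)%N ->
  x != 0 -> y != 0 -> z != 0 ->
  rf (m%:R%:P) / rf (n0%:R%:P + n1%:R *: 'X)
    = (rf x)^-1 + (rf y)^-1 + (rf z)^-1 ->
  (size x = 2%N /\ size y = 2%N -> (size z <= 4)%N) /\
  (size x = 2%N /\ size z = 2%N -> (size y <= 4)%N) /\
  (size y = 2%N /\ size z = 2%N -> (size x <= 4)%N).
Proof.
move=> _ _ n1_gt0 x_neq0 y_neq0 z_neq0 eq_mn.
have size_n := size_natC_addX rat n0 n1_gt0.
have n_neq0 : n0%:R%:P + n1%:R *: 'X != 0 :> {poly rat}.
  by rewrite -size_poly_eq0 size_n.
split; [|split] => -[size_a size_b].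
- have := size_egyptian3 n_neq0 x_neq0 y_neq0 z_neq0 eq_mn.
  by rewrite size_n size_a size_b.
- have := size_egyptian3 (m := m%:R%:P) n_neq0 x_neq0 z_neq0 y_neq0.
  by rewrite size_n size_a size_b; apply; rewrite eq_mn addrAC.
- have := size_egyptian3 (m := m%:R%:P) n_neq0 y_neq0 z_neq0 x_neq0.
  by rewrite size_n size_a size_b; apply; rewrite eq_mn [RHS]addrC addrA.
Qed.
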